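(* Let $M$ be a triangulated compact 3-manifold, possibly with boundary, with $t$ tetrahedra, and let $\mathcal{C}_M\subset\mathbb{R}^{7t}$ be its Haken normal cone. (1) $\mathcal{C}_M$ has at most $2^{7t}$ minimal vertex solutions. (2) The minimal Hilbert basis of $\mathcal{C}_M$ has at most $t^{7t}\,2^{49t^2+14t}$ elements.
   Context: Coordinates of $\mathbb{R}^{7t}$ are indexed by pairs (tetrahedron, elementary normal disk type), with 7 types per tetrahedron (4 triangle types separating one vertex from three, 3 quadrilateral types separating two vertices from two). The Haken normal cone $\mathcal{C}_M$ consists of the $v$ with all $v_i\ge0$ satisfying the matching equations: for each face shared by two tetrahedra and each pair of sides of that face, the sum of the coordinates of disk types in one tetrahedron meeting the face in an arc joining that pair of sides equals the corresponding sum in the other tetrahedron. A minimal vertex solution is the smallest nonzero integer point on an extreme ray of $\mathcal{C}_M$. The minimal Hilbert basis is the set of nonzero $v\in\mathcal{C}_M\cap\mathbb{Z}^{7t}$ not expressible as a sum of two nonzero elements of $\mathcal{C}_M\cap\mathbb{Z}^{7t}$. *)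

From HB Require Import structures.
From mathcomp Require Import all_boot all_order all_algebra all_fingroup.
Set Implicit Arguments. Unset Strict Implicit. Unset Printing Implicit Defensive.
Import Order.TTheory GRing.Theory Num.Theory.
Local Open Scope ring_scope.

(* Tetrahedron vertices are 'I_4 = {0,1,2,3}; face f : 'I_4 is the face
   opposite vertex f.  Normal disk types per tetrahedron are 'I_7:
   type u < 4  : the triangle separating vertex u from the other three;
   type 3 + k (k = 1,2,3) : the quadrilateral separating {0,k} from the
   other two vertices. *)

(* index (in 0..6) of the quad type separating {a,b} (a <> b) from the rest *)
Definition quad_of (a b : nat) : nat :=
  if a == 0%N then (b + 3)%N
  else if b == 0%N then (a + 3)%N
  else (6 - a - b + 3)%N.

Definition tri_type (u : 'I_4) : 'I_7 := widen_ord (isT : (4 <= 7)%N) u.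
Definition quad_type (u w : 'I_4) : 'I_7 := inord (quad_of u w).

(* Face-pairing data of a triangulation with t tetrahedra: face f of
   tetrahedron i is either free (boundary, None) or glued to face (s f)
   of tetrahedron j by the affine map induced by the vertex permutation s
   (restricted to the vertices of face f). *)
Definition gluing (t : nat) := 'I_t -> 'I_4 -> option ('I_t * {perm 'I_4}).

Definition valid_gluing (t : nat) (gl : gluing t) : Prop :=
  forall (i : 'I_t) (f : 'I_4) (j : 'I_t) (s : {perm 'I_4}),
    gl i f = Some (j, s) ->
    gl j (s f) = Some (i, (s^-1)%g) /\ (j, s f) <> (i, f).

Notation ncoord R t := {ffun 'I_t * 'I_7 -> R}.

(* Sum of the coordinates of the disk types of tetrahedron i meeting face f
   in the normal arc cutting off vertex u of that face (i.e. the arc joining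
   the two sides of the face adjacent to u): triangle u and the quad
   separating {u,f} from the other two vertices. *)
Definition arc_sum (R : realFieldType) (t : nat) (v : ncoord R t)
    (i : 'I_t) (f u : 'I_4) : R :=
  v (i, tri_type u) + v (i, quad_type u f).

Definition matching (R : realFieldType) (t : nat) (gl : gluing t)
    (v : ncoord R t) : Prop :=
  forall (i : 'I_t) (f : 'I_4) (j : 'I_t) (s : {perm 'I_4}),
    gl i f = Some (j, s) ->
    forall u : 'I_4, u != f -> arc_sum v i f u = arc_sum v j (s f) (s u).

Definition scal (R : realFieldType) (t : nat) (l : R) (w : ncoord R t)
  : ncoord R t := [ffun x => l * w x].

Definition in_cone (R : realFieldType) (t : nat) (gl : gluing t)
    (v : ncoord R t) : Prop :=
  (forall x, 0 <= v x) /\ matching gl v.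

Definition integral (R : realFieldType) (t : nat) (v : ncoord R t) : Prop :=
  forall x, exists z : int, v x = z%:~R.

Definition extreme_ray (R : realFieldType) (t : nat) (gl : gluing t)
    (w : ncoord R t) : Prop :=
  in_cone gl w /\ w <> 0 /\
  forall a b : ncoord R t, in_cone gl a -> in_cone gl b -> a + b = w ->
    exists2 l : R, 0 <= l & a = scal l w.

Definition minimal_vertex_solution (R : realFieldType) (t : nat)
    (gl : gluing t) (w : ncoord R t) : Prop :=
  extreme_ray gl w /\ integral w /\
  forall l : R, 0 < l -> integral (scal l w) -> 1 <= l.

Definition hilbert_basis_elt (R : realFieldType) (t : nat)
    (gl : gluing t) (v : ncoord R t) : Prop :=
  in_cone gl v /\ integral v /\ v <> 0 /\
  ~ (exists a b : ncoord R t,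
       in_cone gl a /\ integral a /\ a <> 0 /\
       in_cone gl b /\ integral b /\ b <> 0 /\ a + b = v).

From HB Require Import structures.
From mathcomp Require Import all_boot all_order all_algebra all_fingroup.
From mathcomp Require Import zify.
From Stdlib Require Import ClassicalEpsilon Classical_Prop.
Set Implicit Arguments. Unset Strict Implicit. Unset Printing Implicit Defensive.
Import Order.TTheory GRing.Theory Num.Theory.
Local Open Scope ring_scope.

(* Each matching equation reads v p1 - v q1 + (v p2 - v q2) = 0, so every square
   minor of the system is the sum of two incidence matrices of directed graphs;
   these are totally unimodular, and multilinearity in the rows bounds the minor
   of size k by 2^k.  Cramer's rule applied to a support-minimal nonzero vector
   of the cone then gives, below any nonzero cone vector h, a nonzero integral
   cone vector r with entries at most 2^(7t-1).  Subtracting from h the largest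
   multiple of r that stays in the cone kills a coordinate, so iterating shows
   that either such an r lies below h or the entries of h are at most
   7t 2^(7t-1).  For a Hilbert basis element the first case forces h = r, and
   counting integer vectors with these bounds gives (2).  For (1), an extreme ray
   is determined by its support, hence so is its minimal integral point. *)

Lemma det_row_sums_eq0 (R : comPzRingType) m (M : 'M[R]_m.+1) :
  (forall i, \sum_j M i j = 0) -> \det M = 0.
Proof.
move=> row_sum0; have : M *m const_mx 1 = 0 :> 'cV_m.+1.
  apply/matrixP => i k; rewrite !mxE -[RHS](row_sum0 i).
  by apply: eq_bigr => j _; rewrite mxE mulr1.
move/(congr1 (mulmx (\adj M)))/matrixP/(_ ord0 ord0).
by rewrite mulmxA mul_adj_mx mul_scalar_mx mulmx0 !mxE mulr1.
Qed.

Definition incidence_mx (T : eqType) m n (al ga : 'I_m -> option T)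
    (ka : 'I_n -> T) : 'M[int]_(m, n) :=
  \matrix_(i, j) ((al i == Some (ka j))%:R - (ga i == Some (ka j))%:R).

Lemma sum_eq_Some (T : eqType) n (ka : 'I_n -> T) (o : option T) :
  injective ka ->
  \sum_j ((o == Some (ka j))%:R : int) = [exists j, o == Some (ka j)]%:R.
Proof.
move=> inj_ka; case: existsP => [[j /eqP ->]|none]; last first.
  by rewrite big1 // => j _; case: eqP => // o_j; case: none; exists j; apply/eqP.
rewrite (bigD1 j) //= eqxx big1 ?addr0 // => k kj.
by rewrite [_ == _](inj_eq inj_ka) eq_sym (negbTE kj).
Qed.

Lemma incidence_mx_row_single (T : eqType) m n (al ga : 'I_m -> option T)
    (ka : 'I_n.+1 -> T) i : injective ka ->
  ~~ [&& [exists j, al i == Some (ka j)], [exists j, ga i == Some (ka j)]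
       & al i != ga i] ->
  exists j0, forall j, j != j0 -> incidence_mx al ga ka i j = 0.
Proof.
move=> inj_ka; have [al_ga _|al_ga] := eqVneq (al i) (ga i).
  by exists ord0 => j _; rewrite mxE al_ga subrr.
have hitF (o : option T) j0 j : o = Some (ka j0) -> j != j0 -> (o == Some (ka j)) = false.
  by move=> -> ne; rewrite [_ == _](inj_eq inj_ka) eq_sym (negbTE ne).
have missF (o : option T) j :
    ~ (exists j, o == Some (ka j)) -> (o == Some (ka j)) = false.
  by move=> miss; apply/negP => hit_j; case: miss; exists j.
rewrite andbT; case: existsP => [[j0 /eqP al_j0]|al_miss];
  case: existsP => [[j1 /eqP ga_j1]|ga_miss] //= _.
- by exists j0 => j ne; rewrite mxE (hitF (al i) j0) // missF.
- by exists j1 => j ne; rewrite mxE (hitF (ga i) j1) // missF.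
- by exists ord0 => j _; rewrite mxE !missF.
Qed.

Lemma det_incidence_mx_le1 (T : eqType) m (al ga : 'I_m -> option T)
    (ka : 'I_m -> T) : `|\det (incidence_mx al ga ka)| <= 1.
Proof.
elim: m al ga ka => [|m IH] al ga ka; first by rewrite det_mx00 normr1.
have [/injectiveP inj_ka|] := boolP (injectiveb ka); last first.
  case/injectivePn=> j1 [j2 ne12 eq12]; rewrite -det_tr.
  by rewrite (determinant_alternate ne12) ?normr0 // => i; rewrite !mxE eq12.
have [all_arcs|] := boolP [forall i, [&& [exists j, al i == Some (ka j)],
                                         [exists j, ga i == Some (ka j)] & al i != ga i]].
  rewrite det_row_sums_eq0 ?normr0 // => i.
  under eq_bigr do rewrite mxE.
  rewrite sumrB !sum_eq_Some //; have /and3P [-> -> _] := forallP all_arcs i.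
  exact: subrr.
rewrite negb_forall => /existsP [i /(incidence_mx_row_single inj_ka) [j0 row_i]].
rewrite (expand_det_row _ i) (bigD1 j0) //= big1 ?addr0; last first.
  by move=> j /row_i ->; rewrite mul0r.
rewrite normrM /cofactor normrM normrX normrN1 expr1n mul1r.
have -> : row' i (col' j0 (incidence_mx al ga ka)) =
    incidence_mx (al \o lift i) (ga \o lift i) (ka \o lift j0).
  by apply/matrixP => i' j'; rewrite !mxE.
rewrite -[1]mulr1; apply: ler_pM => //; try exact: IH.
by rewrite mxE; case: (_ == _); case: (_ == _).
Qed.

Definition row_mix (R : Type) m n (D : {set 'I_m}) (A B : 'M[R]_(m, n)) :=
  \matrix_(i, j) if i \in D then B i j else A i j.

Lemma det_addmx_le (R : numDomainType) m (A B : 'M[R]_m) (c : R) :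
  (forall D, `|\det (row_mix D A B)| <= c) -> `|\det (A + B)| <= 2 ^+ m * c.
Proof.
suff partial_sum k (D : {set 'I_m}) A' : #|D| = k ->
    (forall D', `|\det (row_mix D' A' B)| <= c) ->
    `|\det (A' + row_mix D 0 B)| <= 2 ^+ k * c.
  have -> : A + B = A + row_mix setT 0 B.
    by apply/matrixP => i j; rewrite !mxE in_setT.
  by apply: partial_sum; rewrite cardsT card_ord.
elim: k D A' => [|k IH] D A' cardD mixA'.
  have -> : A' + row_mix D 0 B = row_mix set0 A' B.
    by apply/matrixP => i j; rewrite !mxE (cards0_eq cardD) in_set0 addr0.
  by rewrite expr0 mul1r.
have [i0 Di0] : exists i0, i0 \in D by apply/set0Pn; rewrite -card_gt0 cardD.
have cardD' : #|D :\ i0| = k by move: cardD; rewrite (cardsD1 i0) Di0 => -[].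
pose A'' := row_mix [set i0] A' B.
have mixA'' D' : `|\det (row_mix D' A'' B)| <= c.
  suff -> : row_mix D' A'' B = row_mix (i0 |: D') A' B by [].
  by apply/matrixP => i j; rewrite !mxE !inE; case: (i \in D'); case: (i == i0).
rewrite (@determinant_multilinear _ _ _ (A' + row_mix (D :\ i0) 0 B)
    (A'' + row_mix (D :\ i0) 0 B) i0 1 1); first last.
- by apply/matrixP => i j; rewrite !mxE !inE eq_sym (negbTE (neq_lift _ _)).
- by apply/matrixP => i j; rewrite !mxE !inE eq_sym (negbTE (neq_lift _ _)).
- by apply/rowP => j; rewrite !mxE !inE Di0 eqxx /= !mul1r !addr0.
rewrite !mul1r exprS mulr2n !mulrDl mul1r.
by apply: le_trans (ler_normD _ _) _; apply: lerD; apply: IH.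
Qed.

Lemma det_add_incidence_mx_le (T : eqType) m (a1 g1 a2 g2 : 'I_m -> option T)
    (ka : 'I_m -> T) :
  `|\det (incidence_mx a1 g1 ka + incidence_mx a2 g2 ka)| <= 2 ^+ m.
Proof.
rewrite -[2 ^+ m]mulr1; apply: det_addmx_le => D.
pose mix (o1 o2 : 'I_m -> option T) i := if i \in D then o2 i else o1 i.
suff -> : row_mix D (incidence_mx a1 g1 ka) (incidence_mx a2 g2 ka) =
          incidence_mx (mix a1 a2) (mix g1 g2) ka by apply: det_incidence_mx_le1.
by apply/matrixP => i j; rewrite !mxE /mix; case: (i \in D).
Qed.

Lemma sum_codom (V : nmodType) (T : finType) k (ka : 'I_k -> T) (F : T -> V) :
  injective ka -> (forall x, x \notin codom ka -> F x = 0) ->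
  \sum_x F x = \sum_j F (ka j).
Proof.
move=> inj_ka F0; rewrite [RHS](partition_big ka predT) //=.
apply: eq_bigr => x _; have [/codomP [j ->]|x_ka] := boolP (x \in codom ka).
  by rewrite (big_pred1 j) // => l /=; rewrite (inj_eq inj_ka).
by rewrite F0 // big1 // => j /eqP ka_j; case/codomP: x_ka; exists j.
Qed.

Section IntegerCone.
Variables (R : realFieldType) (X E : finType) (A : E -> X -> int).
Local Notation vec := {ffun X -> R}.

Definition supp (v : vec) : {set X} := [set x | v x != 0].
Definition in_kernel (v : vec) : Prop := forall e, \sum_x (A e x)%:~R * v x = 0.
Definition cone (v : vec) : Prop := (forall x, 0 <= v x) /\ in_kernel v.
Definition int_vec (v : vec) : Prop := forall x, exists z : int, v x = z%:~R.
Definition min_supp (r : vec) : Prop :=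
  [/\ cone r, r != 0 & forall y, cone y -> y != 0 ->
        supp y \subset supp r -> supp r \subset supp y].
Definition coef_mx k (rho : 'I_k -> E) (ka : 'I_k -> X) : 'M[int]_k :=
  \matrix_(i, j) A (rho i) (ka j).

Lemma supp_eq0 (v : vec) : (supp v == set0) = (v == 0).
Proof.
apply/eqP/eqP => [S0|->]; last by apply/setP => x; rewrite !inE ffunE eqxx.
apply/ffunP => x; rewrite ffunE; apply/eqP; apply: contraT => vx.
by have := in_set0 x; rewrite -S0 inE vx.
Qed.

Lemma exists_pos (v : vec) : (forall x, 0 <= v x) -> v != 0 -> exists x, 0 < v x.
Proof.
move=> v_ge0; rewrite -supp_eq0 => /set0Pn [x]; rewrite inE => vx.
by exists x; rewrite lt_def vx v_ge0.
Qed.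

Lemma int_vec_bounded (v : vec) (B : nat) : int_vec v ->
  (forall x, 0 <= v x <= B%:R) -> exists f : {ffun X -> 'I_B.+1}, v = [ffun x => (f x)%:R].
Proof.
move=> Iv v_bd; suff /fin_all_exists [f fE] : forall x, exists n : 'I_B.+1, v x = n%:R.
  by exists [ffun x => f x]; apply/ffunP => x; rewrite !ffunE fE.
move=> x; have [z vz] := Iv x; have /andP [v_ge0 v_le] := v_bd x.
have z_ge0 : 0 <= z by rewrite -(ler0z R) -vz.
have vE : v x = `|z|%N%:R by rewrite vz -[z in z%:~R](gez0_abs z_ge0).
by exists (inord `|z|%N); rewrite inordK // ltnS -(ler_nat R) -vE.
Qed.

Lemma in_kernel_sub_scale (a : R) (v w : vec) :
  in_kernel v -> in_kernel w -> in_kernel [ffun x => v x - a * w x].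
Proof.
move=> Kv Kw e; under eq_bigr do rewrite ffunE mulrBr mulrCA.
by rewrite sumrB -mulr_sumr Kv Kw mulr0 subrr.
Qed.

Lemma in_kernel_scale (a : R) (v : vec) :
  in_kernel v -> in_kernel [ffun x => a * v x].
Proof.
by move=> Kv e; under eq_bigr do rewrite ffunE mulrCA; rewrite -mulr_sumr Kv mulr0.
Qed.

Lemma exists_min_ratio (r y : vec) : (forall x, 0 <= r x) ->
  (exists x, 0 < y x) ->
  exists2 x0, 0 < y x0 & forall x, 0 <= r x - r x0 / y x0 * y x.
Proof.
move=> r_ge0 [x1 yx1].
case: (@arg_minP _ _ _ x1 (fun x => 0 < y x) (fun x => r x / y x) yx1) => x0 yx0 min_x0.
exists x0 => // x; rewrite subr_ge0; have [yx_gt0|yx_le0] := ltrP 0 (y x).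
  by rewrite -ler_pdivlMr //; apply: min_x0.
by apply: le_trans (r_ge0 x); rewrite mulr_ge0_le0 // divr_ge0 // ltW.
Qed.

Lemma supp_sub_ratio_proper (h r : vec) y : supp r \subset supp h -> 0 < r y ->
  supp [ffun x => h x - h y / r y * r x] \proper supp h.
Proof.
move=> srh ry; rewrite properE; apply/andP; split.
  apply/subsetP => x; rewrite !inE ffunE; apply: contraNneq => hx.
  have /eqP rx : r x == 0.
    apply: contraT => rx; have /(subsetP srh) : x \in supp r by rewrite inE.
    by rewrite inE hx eqxx.
  by rewrite hx rx mulr0 subrr.
apply/subsetPn; exists y; first by apply: (subsetP srh); rewrite inE gt_eqF.
by rewrite inE ffunE divfK ?subrr ?eqxx ?gt_eqF.
Qed.

Lemma exists_min_supp (g : vec) : cone g -> g != 0 ->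
  exists2 r, min_supp r & supp r \subset supp g.
Proof.
move: {2}#|supp g|.+1 (ltnSn #|supp g|) => k; elim: k g => // k IH g lt_gk Cg g0.
case: (classic (exists y, [/\ cone y, y != 0, supp y \subset supp g
                            & ~~ (supp g \subset supp y)])).
  case=> y [Cy y0 syg ngy].
  have lt_yk : (#|supp y| < k)%N.
    rewrite -ltnS; apply: leq_trans lt_gk; rewrite ltnS.
    by apply: proper_card; rewrite properE syg.
  by have [r min_r sry] := IH y lt_yk Cy y0; exists r => //; apply: subset_trans syg.
move=> no_smaller; exists g => //; split=> // y Cy y0 syg.
by apply: contraT => ngy; case: no_smaller; exists y.
Qed.

(* Subtracting from r the largest multiple of y that keeps it nonnegative would
   shrink its support, so r is a positive multiple of y. *)
Lemma min_supp_sign (r y : vec) : min_supp r -> in_kernel y ->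
  supp y \subset supp r -> (exists x, 0 < y x) -> forall x, 0 <= y x.
Proof.
case=> -[r_ge0 Kr] r0 min_r Ky syr y_pos.
have [x0 yx0 ratio] := exists_min_ratio r_ge0 y_pos; set mu := r x0 / y x0 in ratio.
have mu_gt0 : 0 < mu.
  rewrite divr_gt0 // lt_def r_ge0 andbT.
  have /(subsetP syr) : x0 \in supp y by rewrite inE gt_eqF.
  by rewrite inE.
pose w : vec := [ffun x => r x - mu * y x].
have w0 : w = 0.
  apply/eqP; apply: contraT => w0; have Cw : cone w.
    by split; [move=> x; rewrite ffunE; apply: ratio | exact: in_kernel_sub_scale].
  have := supp_sub_ratio_proper syr yx0; rewrite properE => /andP [swr /negP []].
  exact: min_r.
move=> x; have /eqP := congr1 (fun f : vec => f x) w0.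
by rewrite !ffunE subr_eq0 => /eqP rx; rewrite -(pmulr_rge0 _ mu_gt0) -rx r_ge0.
Qed.

Lemma coef_mx_inj k (rho : 'I_k -> E) (ka : 'I_k -> X) :
  \det (coef_mx rho ka) != 0 -> injective ka.
Proof.
move=> det_ne0 j1 j2 ka12; apply/eqP; apply: contraT => ne12; case/eqP: det_ne0.
by rewrite -det_tr; apply: (determinant_alternate ne12) => i; rewrite !mxE ka12.
Qed.

Lemma kernel_eq0_of_unit_minor k (rho : 'I_k -> E) (ka : 'I_k -> X) (r : vec) :
  \det (coef_mx rho ka) != 0 -> in_kernel r ->
  (forall x, x \notin codom ka -> r x = 0) -> r = 0.
Proof.
move=> det_ne0 Kr r_off; have inj_ka := coef_mx_inj det_ne0.
pose N : 'M[R]_k := map_mx intr (coef_mx rho ka).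
have N_unit : N \in unitmx by rewrite unitmxE unitfE det_map_mx intr_eq0.
have /(congr1 (mulmx (invmx N))) : N *m \col_j r (ka j) = 0.
  apply/matrixP => i c; rewrite !mxE -[RHS](Kr (rho i)) (sum_codom inj_ka).
    by apply: eq_bigr => j _; rewrite !mxE.
  by move=> x /r_off ->; rewrite mulr0.
rewrite mulKmx // mulmx0 => /matrixP r_ka.
apply/ffunP => x; rewrite ffunE; have [/codomP [j ->]|/r_off //] := boolP (x \in codom ka).
by have := r_ka j ord0; rewrite !mxE.
Qed.

Lemma det_coef_mx_cons e k (rho : k.-tuple E) (ka : 'I_k.+1 -> X) :
  \det (coef_mx (tnth [tuple of e :: rho]) ka) =
  \sum_l A e (ka l) * ((-1) ^+ l * \det (coef_mx (tnth rho) (ka \o lift l))).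
Proof.
rewrite (expand_det_row _ ord0); apply: eq_bigr => l _.
rewrite mxE tnth0 /cofactor add0n; congr (_ * (_ * \det _)).
by apply/matrixP => i j; rewrite !mxE tnthS.
Qed.

Section BoundedMinors.
Variable Delta : nat.
Hypothesis minor_le : forall k (rho : 'I_k -> E) (ka : 'I_k -> X),
  (k < #|X|)%N -> `|\det (coef_mx rho ka)| <= Delta%:R.

Lemma cofactor_kernel_vector k (rho : k.-tuple E) (ka : k.-tuple X) (c : X) :
  injective (tnth [tuple of c :: ka]) ->
  (forall e, \det (coef_mx (tnth [tuple of e :: rho]) (tnth [tuple of c :: ka])) = 0) ->
  exists z : vec, [/\ in_kernel z, int_vec z,
    z c = (\det (coef_mx (tnth rho) (tnth ka)))%:~R,
    {subset supp z <= c :: ka} & forall x, `|z x| <= Delta%:R].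
Proof.
set ka' := [tuple of c :: ka] => inj_ka' det0.
pose zl (l : 'I_k.+1) := (-1) ^+ l * \det (coef_mx (tnth rho) (tnth ka' \o lift l)).
pose z : vec := [ffun x => if [pick l | tnth ka' l == x] is Some l then (zl l)%:~R else 0].
have z_ka' l : z (tnth ka' l) = (zl l)%:~R.
  by rewrite ffunE; case: pickP => [l' /eqP /inj_ka' -> // | /(_ l)]; rewrite eqxx.
have z_off x : x \notin codom (tnth ka') -> z x = 0.
  by rewrite ffunE; case: pickP => // l /eqP <-; rewrite codom_f.
have lt_kX : (k < #|X|)%N by have := leq_card _ inj_ka'; rewrite card_ord.
exists z; split.
- move=> e; rewrite (sum_codom inj_ka'); last by move=> x /z_off ->; rewrite mulr0.
  transitivity ((\det (coef_mx (tnth [tuple of e :: rho]) (tnth ka')))%:~R : R).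
    rewrite det_coef_mx_cons rmorph_sum.
    by apply: eq_bigr => l _; rewrite z_ka' rmorphM.
  by rewrite det0.
- move=> x; rewrite ffunE; case: pickP => [l _|_]; first by exists (zl l).
  by exists 0.
- rewrite -[c](tnth0 _ ka) z_ka' /zl expr0 mul1r.
  by congr (\det _)%:~R; apply/matrixP => i j; rewrite !mxE /= tnthS.
- move=> x; rewrite inE; have [/codomP [l ->] _|/z_off ->] := boolP (x \in codom (tnth ka')).
    exact: mem_tnth.
  by rewrite eqxx.
- move=> x; have [/codomP [l ->]|/z_off ->] := boolP (x \in codom (tnth ka')); last first.
    by rewrite normr0 ler0n.
  rewrite z_ka' -intr_norm -[Delta%:R]/((Delta%:Z)%:~R : R) ler_int.
  by rewrite /zl normrM normrX normrN1 expr1n mul1r -natz minor_le.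
Qed.

(* Take a maximal nonsingular minor with columns in supp r; any further column
   of supp r gives a corank-one system whose cofactors form the kernel vector. *)
Lemma exists_int_kernel_vector (r : vec) : r != 0 -> in_kernel r ->
  exists z : vec, [/\ z != 0, in_kernel z, int_vec z, supp z \subset supp r
                   & forall x, `|z x| <= Delta%:R].
Proof.
move=> r0 Kr; set S := supp r.
pose P k := [exists rho : k.-tuple E, exists ka : k.-tuple X,
  all (mem S) ka && (\det (coef_mx (tnth rho) (tnth ka)) != 0)].
have P0 : exists k, P k.
  exists 0%N; apply/existsP; exists [tuple]; apply/existsP; exists [tuple].
  by rewrite det_mx00 oner_eq0.
have P_le k : P k -> (k <= #|X|)%N.
  by case/existsP=> rho /existsP [ka /andP [_ /coef_mx_inj/leq_card]]; rewrite card_ord.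
case: (ex_maxnP P0 P_le) => m /existsP [rho /existsP [ka /andP [kaS det_ne0]]] P_max.
have [c cS c_ka] : exists2 c, c \in S & c \notin ka.
  have [/exists_inP [c cS c_ka]|/exists_inPn kaS'] := boolP [exists c in S, c \notin ka].
    by exists c.
  case/eqP: r0; apply: (kernel_eq0_of_unit_minor det_ne0 Kr) => x x_ka.
  apply/eqP; apply: contraNT x_ka => rx.
  have xS : x \in S by rewrite inE.
  by have /negPn/tnthP [j ->] := kaS' x xS; apply: codom_f.
have inj_ka' : injective (tnth [tuple of c :: ka]).
  have inj_ka := coef_mx_inj det_ne0.
  move=> l1 l2; case: (unliftP ord0 l1) => [j1 ->|->];
    case: (unliftP ord0 l2) => [j2 ->|->]; rewrite ?tnthS ?tnth0 //.
  - by move/inj_ka ->.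
  - by move=> ka_c; case/negP: c_ka; rewrite -ka_c mem_tnth.
  - by move=> c_ka'; case/negP: c_ka; rewrite c_ka' mem_tnth.
have det0 e : \det (coef_mx (tnth [tuple of e :: rho]) (tnth [tuple of c :: ka])) = 0.
  apply/eqP; apply: contraT => det_ne0'.
  suff /P_max : P m.+1 by rewrite ltnn.
  apply/existsP; exists [tuple of e :: rho]; apply/existsP; exists [tuple of c :: ka].
  by rewrite /= cS kaS.
have [z [Kz Iz zc supp_z z_le]] := cofactor_kernel_vector inj_ka' det0.
exists z; split => //.
  apply: contraNneq det_ne0 => z0.
  by move: zc; rewrite z0 ffunE => /esym/eqP; rewrite intr_eq0.
apply/subsetP => x /supp_z; rewrite inE => /orP [/eqP -> //|].
exact: (allP kaS).
Qed.

Lemma exists_small_int_cone_vector (h : vec) : cone h -> h != 0 ->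
  exists r : vec, [/\ cone r, int_vec r, r != 0, supp r \subset supp h
                   & forall x, r x <= Delta%:R].
Proof.
move=> Ch h0; have [r0 min_r0 sr0h] := exists_min_supp Ch h0.
case: (min_r0) => -[_ Kr0] r00 _.
have [z [z0 Kz Iz szr z_le]] := exists_int_kernel_vector r00 Kr0.
have [x1] : exists x1, x1 \in supp z by apply/set0Pn; rewrite supp_eq0.
rewrite inE => zx1.
have supp_scale (a : R) : supp [ffun x => a * z x] \subset supp r0.
  apply: subset_trans szr; apply/subsetP => x.
  by rewrite !inE ffunE mulf_eq0 negb_or => /andP [].
have [s [s1 s_pos]] : exists s : int, `|s| = 1 /\ 0 < s%:~R * z x1.
  have [zx1_gt0|] := ltrP 0 (z x1); first by exists 1; rewrite mul1r.
  rewrite le_eqVlt (negbTE zx1) /= => zx1_lt0.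
  by exists (-1); rewrite normrN normr1 mulN1r oppr_gt0.
pose r : vec := [ffun x => s%:~R * z x].
have r_ge0 : forall x, 0 <= r x.
  apply: (min_supp_sign min_r0 (in_kernel_scale _ Kz) (supp_scale _)).
  by exists x1; rewrite ffunE.
exists r; split.
- by split; [exact: r_ge0 | exact: in_kernel_scale].
- by move=> x; have [n zx] := Iz x; exists (s * n); rewrite ffunE zx intrM.
- by apply/eqP => /ffunP /(_ x1); rewrite !ffunE => rx1; rewrite rx1 ltxx in s_pos.
- exact: subset_trans (supp_scale _) sr0h.
- move=> x; rewrite -(ger0_norm (r_ge0 x)) ffunE normrM -intr_norm s1 mul1r.
  exact: z_le.
Qed.

Lemma cone_int_below_or_le (h : vec) : cone h ->
  (exists r : vec, [/\ cone r, int_vec r, r != 0, forall x, r x <= h x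
                    & forall x, r x <= Delta%:R])
  \/ forall x, h x <= (#|supp h| * Delta)%:R.
Proof.
move: {2}#|supp h|.+1 (ltnSn #|supp h|) => k.
elim: k h => // k IH h lt_hk [h_ge0 Kh].
have [->|h0] := eqVneq h 0; first by right=> x; rewrite ffunE ler0n.
have [r [[r_ge0 Kr] Ir r0 srh r_le]] := exists_small_int_cone_vector (conj h_ge0 Kh) h0.
have [y1 ry1 ratio] := exists_min_ratio h_ge0 (exists_pos r_ge0 r0).
set lam := h y1 / r y1 in ratio.
have lam_ge0 : 0 <= lam by rewrite divr_ge0 ?h_ge0 ?ltW.
have [lam_ge1|lam_lt1] := lerP 1 lam.
  left; exists r; split => // x.
  apply: (@le_trans _ _ (lam * r x)); first by rewrite ler_peMl.
  by rewrite -subr_ge0.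
pose h' : vec := [ffun x => h x - lam * r x].
have h'E x : h' x = h x - lam * r x by rewrite ffunE.
have Ch' : cone h'.
  by split; [move=> x; rewrite h'E; apply: ratio | exact: in_kernel_sub_scale].
have h'_le x : h' x <= h x by rewrite h'E gerBl mulr_ge0.
have sh'h : supp h' \proper supp h := supp_sub_ratio_proper srh ry1.
have lt_h'k : (#|supp h'| < k)%N by rewrite -ltnS; apply: leq_trans lt_hk; apply: proper_card.
case: (IH h' lt_h'k Ch') => [[r' [Cr' Ir' r'0 r'h' r'_le]]|h'_bound].
  by left; exists r'; split => // x; apply: le_trans (h'_le x).
right=> x; have -> : h x = h' x + lam * r x by rewrite h'E subrK.
apply: le_trans (lerD (h'_bound x) (_ : lam * r x <= Delta%:R)) _.
  by apply: le_trans (r_le x); rewrite ler_piMl // ltW.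
by rewrite -natrD ler_nat -mulSnr leq_mul2r (proper_card sh'h) orbT.
Qed.

Lemma minimal_int_cone_le (h : vec) : cone h ->
  (forall r, cone r -> int_vec r -> r != 0 -> (forall x, r x <= h x) -> r = h) ->
  forall x, h x <= (#|X| * Delta)%:R.
Proof.
move=> Ch h_min x; have [[r [Cr Ir r0 r_h r_le]]|h_le] := cone_int_below_or_le Ch.
  rewrite -(h_min r) //; apply: le_trans (r_le x) _.
  by rewrite ler_nat leq_pmull //; apply/card_gt0P; exists x.
by apply: le_trans (h_le x) _; rewrite ler_nat leq_mul2r max_card orbT.
Qed.

End BoundedMinors.

End IntegerCone.

Section MatchingEquations.
Variables (t : nat) (gl : gluing t).
Local Notation X := ('I_t * 'I_7)%type.
Local Notation E := ('I_t * 'I_4 * 'I_4)%type.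

(* The matching equation at the corner u of face f of tetrahedron i, read as
   [v p1 - v q1 + (v p2 - v q2) = 0] for the two pairs [(p1, q1), (p2, q2)] of
   (triangle, triangle) and (quad, quad) types returned here. *)
Definition match_arcs (e : E) : option (X * X) * option (X * X) :=
  let: (i, f, u) := e in
  if gl i f is Some (j, s) then
    if u != f then (Some ((i, tri_type u), (j, tri_type (s u))),
                    Some ((i, quad_type u f), (j, quad_type (s u) (s f))))
    else (None, None)
  else (None, None).

Definition arc_coef (o : option (X * X)) (x : X) : int :=
  (omap fst o == Some x)%:R - (omap snd o == Some x)%:R.

Definition match_coef (e : E) (x : X) : int :=
  arc_coef (match_arcs e).1 x + arc_coef (match_arcs e).2 x.

Lemma sum_arc_coef (R : realFieldType) (v : {ffun X -> R}) o :
  \sum_x (arc_coef o x)%:~R * v x = oapp (fun p => v p.1 - v p.2) 0 o.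
Proof.
have sum_at (o' : option X) : \sum_x ((o' == Some x)%:R)%:~R * v x = oapp v 0 o'.
  case: o' => [y|] /=; last by rewrite big1 // => x _; rewrite mul0r.
  rewrite (bigD1 y) //= eqxx mul1r big1 ?addr0 // => x /negbTE xy.
  by rewrite -[Some y == Some x]/(y == x) eq_sym xy mul0r.
under eq_bigr do rewrite /arc_coef intrB mulrBl.
by rewrite sumrB !sum_at; case: o => [[p q]|] //=; rewrite subrr.
Qed.

Lemma matching_kernel (R : realFieldType) (v : ncoord R t) :
  matching gl v <-> in_kernel match_coef v.
Proof.
have kerE e : \sum_x (match_coef e x)%:~R * v x =
    oapp (fun p => v p.1 - v p.2) 0 (match_arcs e).1 +
    oapp (fun p => v p.1 - v p.2) 0 (match_arcs e).2.
  by rewrite -!sum_arc_coef -big_split; apply: eq_bigr => x _; rewrite intrD mulrDl.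
split=> [M [[i f] u]|K i f j s gl_i u uf]; rewrite ?kerE /=.
  case gl_i: (gl i f) => [[j s]|] /=; last by rewrite addr0.
  case: ifP => uf /=; last by rewrite addr0.
  by have := M i f j s gl_i u uf; rewrite /arc_sum addrACA -opprD => ->; rewrite subrr.
have := K (i, f, u); rewrite kerE /= gl_i uf /= /arc_sum => /eqP.
by rewrite addrACA -opprD subr_eq0 => /eqP.
Qed.

Lemma match_minor_le k (rho : 'I_k -> E) (ka : 'I_k -> X) :
  `|\det (coef_mx match_coef rho ka)| <= 2 ^+ k.
Proof.
suff -> : coef_mx match_coef rho ka =
  incidence_mx (fun i => omap fst (match_arcs (rho i)).1)
               (fun i => omap snd (match_arcs (rho i)).1) ka +
  incidence_mx (fun i => omap fst (match_arcs (rho i)).2)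
               (fun i => omap snd (match_arcs (rho i)).2) ka.
  exact: det_add_incidence_mx_le.
by apply/matrixP => i j; rewrite !mxE.
Qed.

End MatchingEquations.

Lemma exists_cover_seq (T : eqType) (K : finType) (P : T -> Prop) (g : K -> T) :
  (forall a, P a -> exists k, a = g k) ->
  exists s : seq T, (size s <= #|K|)%N /\ forall a, P a -> a \in s.
Proof.
move=> onto; exists (map g (enum K)); split; first by rewrite size_map -cardE.
by move=> a /onto [k ->]; apply: map_f; rewrite mem_enum.
Qed.

Section NormalCone.
Variables (R : realFieldType) (t : nat) (gl : gluing t).
Local Notation X := ('I_t * 'I_7)%type.

Lemma card_coords : #|{: X}| = (7 * t)%N.
Proof. by rewrite card_prod !card_ord mulnC. Qed.

Lemma in_coneE (v : ncoord R t) : in_cone gl v <-> cone (match_coef gl) v.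
Proof. by rewrite /in_cone matching_kernel. Qed.

Lemma extreme_ray_supp (w w' : ncoord R t) : extreme_ray gl w -> in_cone gl w' ->
  supp w' \subset supp w -> exists2 c, 0 <= c & w' = scal c w.
Proof.
case=> [/in_coneE [w_ge0 Kw] [_ w_ext]] /in_coneE [w'_ge0 Kw'] sw'w.
have [->|w'0] := eqVneq w' 0.
  by exists 0 => //; apply/ffunP => x; rewrite !ffunE mul0r.
have [x0 w'x0 ratio] := exists_min_ratio w_ge0 (exists_pos w'_ge0 w'0).
set mu := w x0 / w' x0 in ratio.
have wx0 : 0 < w x0.
  rewrite lt_def w_ge0 andbT; have /(subsetP sw'w) : x0 \in supp w' by rewrite inE gt_eqF.
  by rewrite inE.
have mu_gt0 : 0 < mu by rewrite divr_gt0.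
have Ca : in_cone gl (scal mu w').
  apply/in_coneE; split; last exact: in_kernel_scale.
  by move=> x; rewrite ffunE mulr_ge0 // ltW.
have Cb : in_cone gl [ffun x => w x - mu * w' x].
  apply/in_coneE; split; last exact: in_kernel_sub_scale.
  by move=> x; rewrite ffunE; apply: ratio.
have ab : scal mu w' + [ffun x => w x - mu * w' x] = w.
  by apply/ffunP => x; rewrite !ffunE addrC subrK.
have [l l_ge0 mu_w'] := w_ext _ _ Ca Cb ab.
exists (l / mu); first by rewrite divr_ge0 // ltW.
apply/ffunP => x; have := congr1 (fun f : ncoord R t => f x) mu_w'.
by rewrite !ffunE => mu_w'x; rewrite mulrAC -mu_w'x mulrC mulKf // gt_eqF.
Qed.

Lemma minimal_vertex_solution_supp_inj (w w' : ncoord R t) :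
  minimal_vertex_solution gl w -> minimal_vertex_solution gl w' ->
  supp w = supp w' -> w = w'.
Proof.
move=> [ext_w [Iw w_min]] [[Cw' [w'0 _]] [Iw' w'_min]] sww'.
have [c c_ge0 w'E] : exists2 c, 0 <= c & w' = scal c w.
  by apply: extreme_ray_supp; rewrite ?sww'.
have c_gt0 : 0 < c.
  rewrite lt_def c_ge0 andbT; apply/eqP => c0; apply: w'0.
  by rewrite w'E c0; apply/ffunP => x; rewrite !ffunE mul0r.
have c_ge1 : 1 <= c by apply: w_min; rewrite // -w'E.
have wE : w = scal c^-1 w' by rewrite w'E; apply/ffunP => x; rewrite !ffunE mulKf ?gt_eqF.
have c_inv_ge1 : 1 <= c^-1 by apply: w'_min; rewrite ?invr_gt0 -?wE.
have c1 : c = 1 by apply/eqP; rewrite eq_le c_ge1 andbT -invr_ge1 ?unitfE ?gt_eqF.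
by rewrite w'E c1; apply/ffunP => x; rewrite ffunE mul1r.
Qed.

Lemma hilbert_basis_elt_le (h : ncoord R t) : hilbert_basis_elt gl h ->
  forall x, h x <= (7 * t * 2 ^ (7 * t).-1)%:R.
Proof.
case=> /in_coneE Ch [Ih [h0 h_indec]].
rewrite -card_coords; apply: (minimal_int_cone_le _ Ch).
  move=> k rho ka lt_kX; apply: le_trans (match_minor_le _ _ _) _.
  by rewrite natrX ler_eXn2l // -ltnS (ltn_predK lt_kX).
move=> r Cr Ir r0 r_h; apply/eqP; apply: contraT => r_ne_h; case: h_indec.
pose b := [ffun x => h x - 1 * r x].
have bE x : b x = h x - r x by rewrite ffunE mul1r.
exists r, b; split; first exact/in_coneE.
do 2!split => //; first exact/eqP.
split.
  apply/in_coneE; split; last by apply: in_kernel_sub_scale; [case: Ch | case: Cr].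
  by move=> x; rewrite bE subr_ge0.
split.
  move=> x; rewrite bE; have [z1 ->] := Ih x; have [z2 ->] := Ir x.
  by exists (z1 - z2); rewrite intrB.
split; last by apply/ffunP => x; rewrite ffunE bE addrC subrK.
move/ffunP => b0; case/eqP: r_ne_h; apply/ffunP => x.
by apply/eqP; rewrite eq_sym -subr_eq0 -bE b0 ffunE.
Qed.

Lemma minimal_vertex_solutions_cover : exists s : seq (ncoord R t),
  (size s <= 2 ^ (7 * t))%N /\ forall w, minimal_vertex_solution gl w -> w \in s.
Proof.
pose with_supp S (w : ncoord R t) := minimal_vertex_solution gl w /\ supp w = S.
have mvs_onto w : minimal_vertex_solution gl w ->
    exists S, w = epsilon (inhabits 0) (with_supp S).
  move=> mvs_w; exists (supp w).
  have [mvs_w' supp_w'] :=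
    epsilon_spec (inhabits 0) (with_supp (supp w)) (ex_intro _ w (conj mvs_w erefl)).
  exact: minimal_vertex_solution_supp_inj mvs_w mvs_w' (esym supp_w').
have [s [size_s mvs_s]] := exists_cover_seq mvs_onto.
exists s; split => //; move: size_s.
by rewrite -cardsT -powersetT card_powerset cardsT card_coords.
Qed.

Lemma hilbert_basis_cover : exists s : seq (ncoord R t),
  (size s <= (7 * t * 2 ^ (7 * t).-1).+1 ^ (7 * t))%N /\
  forall h, hilbert_basis_elt gl h -> h \in s.
Proof.
set B := (7 * t * 2 ^ (7 * t).-1)%N.
have hb_onto (h : ncoord R t) : hilbert_basis_elt gl h ->
    exists f : {ffun X -> 'I_B.+1}, h = [ffun x => (f x)%:R].
  move=> hb_h; apply: int_vec_bounded (hb_h.2.1) _ => x.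
  by rewrite hb_h.1.1 (hilbert_basis_elt_le hb_h).
have [s [size_s hb_s]] := exists_cover_seq hb_onto.
by exists s; split => //; rewrite card_ffun card_ord card_coords in size_s.
Qed.

End NormalCone.

Lemma hilbert_count_le t :
  ((7 * t * 2 ^ (7 * t).-1).+1 ^ (7 * t) <= t ^ (7 * t) * 2 ^ (49 * t ^ 2 + 14 * t))%N.
Proof.
case: t => [//|t]; set n := (7 * t.+1)%N.
have n_gt0 : (0 < n)%N by rewrite /n; lia.
apply: (@leq_trans ((t.+1 * 2 ^ (n + 2)) ^ n)).
  rewrite leq_exp2r // (_ : (n + 2 = n.-1 + 3)%N); last by lia.
  by rewrite expnD; have := expn_gt0 2 n.-1; rewrite /n; nia.
rewrite expnMn -expnM (_ : ((n + 2) * n = 49 * t.+1 ^ 2 + 14 * t.+1)%N) //.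
by rewrite /n -mulnn; nia.
Qed.

Theorem lemma6p2 (R : realFieldType) (t : nat) (gl : gluing t) :
  valid_gluing gl ->
  (exists s : seq (ncoord R t),
      (size s <= 2 ^ (7 * t))%N /\
      forall w, minimal_vertex_solution gl w -> w \in s) /\
  (exists s : seq (ncoord R t),
      (size s <= t ^ (7 * t) * 2 ^ (49 * t ^ 2 + 14 * t))%N /\
      forall v, hilbert_basis_elt gl v -> v \in s).
Proof.
move=> _; split; first exact: minimal_vertex_solutions_cover.
have [s [size_s hb_s]] := hilbert_basis_cover R gl.
by exists s; split => //; apply: leq_trans size_s (hilbert_count_le t).
Qed.
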